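(* Let $F = \bigwedge_{i\in[c]} C_i$ be a 3-SAT formula over the $p$ variables $x_1,\dots,x_p$ with clauses $C_1,\dots,C_c$, and let $A$ be a partial assignment on these variables, where clauses and partial assignments are viewed as elements of $\mathcal{B}$. Then: 1. (Satisfiability checking) $A \models F$ if and only if $\min_{i\in[c]} E(C_i)\cdot E(A) \ge 1$. 2. (Conflict detection) $F \models \lnot A$ if and only if $\min_{i\in[c]} E(C_i)\cdot E_{\text{not-false}}(A) = 0$. 3. (Deduction) Let $D := \{\ell \in L \mid F\land A \models_1 \ell\}$. Then $$E(D) = \max\Big[\min\Big(\sum_{i\in[c]} E(C_i)\,\mathbf{1}_{\{E(C_i)\cdot E_{\text{not-false}}(A) = 1\}},\ 1\Big) - E_{\text{assigned}}(A),\ 0\Big],$$ where $\max$ and $\min$ are applied elementwise.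
   Context: Literals: $L = \{x_1,\lnot x_1,\dots,x_p,\lnot x_p\}$. $\mathcal{B}$ is the set of subsets of $L$ that do not contain both $x_v$ and $\lnot x_v$ for any $v$. A clause $C\in\mathcal{B}$ denotes the disjunction of its literals; a partial assignment $A\in\mathcal{B}$ sets $x_v$ true if $x_v\in A$, false if $\lnot x_v\in A$, and leaves $x_v$ unassigned otherwise. A 3-SAT formula is a conjunction of clauses each with at most 3 literals. Encodings $E, E_{\text{not-false}}, E_{\text{assigned}}: \mathcal{B}\to\mathbb{R}^{2p}$: for $v\in[p]$, $E(B)_v = \mathbf{1}_{x_v\in B}$, $E(B)_{v+p} = \mathbf{1}_{\lnot x_v\in B}$; $E_{\text{not-false}}(B)_v = \mathbf{1}_{\lnot x_v\notin B}$, $E_{\text{not-false}}(B)_{v+p} = \mathbf{1}_{x_v\notin B}$; $E_{\text{assigned}}(B)_v = E_{\text{assigned}}(B)_{v+p} = \mathbf{1}_{x_v\in B \text{ or } \lnot x_v\in B}$. $A\models F$ means every clause $C_i$ contains a literal belonging to $A$. A literal is forced false by $A$ if its negation belongs to $A$. $F\models\lnot A$ means some clause $C_i$ has all of its literals forced false by $A$. $F\land A\models_1 \ell$ (unit propagation) means there is a clause $C_i$ that is not satisfied by $A$ (contains no literal of $A$) and, after deleting from $C_i$ all literals forced false by $A$, the remaining clause is exactly $\{\ell\}$. For a set $D\subseteq L$, $E(D)$ is defined by the same formula as for $\mathcal{B}$. *)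

From HB Require Import structures.
From mathcomp Require Import all_boot all_order all_algebra.
From mathcomp Require Import constructive_ereal.
Set Implicit Arguments. Unset Strict Implicit. Unset Printing Implicit Defensive.
Import Order.TTheory GRing.Theory Num.Theory.

(* Literals over variables x_1..x_p: (v, true) = x_v, (v, false) = ~ x_v. *)
Definition lit (p : nat) := ('I_p * bool)%type.
Definition negl p (l : lit p) : lit p := (l.1, ~~ l.2).

Definition inB p (B : {set lit p}) : bool :=
  [forall v : 'I_p, ~~ (((v, true) \in B) && ((v, false) \in B))].

(* Coordinate j of R^{2p}: j = v (j < p) refers to x_v, j = v + p refers to ~ x_v. *)
Definition litidx p (j : 'I_(p + p)) : lit p :=
  match split j with inl v => (v, true) | inr v => (v, false) end.

Section Enc.
Variable R : numDomainType.
Local Open Scope ring_scope.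

Definition E p (B : {set lit p}) : 'rV[R]_(p + p) :=
  \row_j ((litidx j \in B) : nat)%:R.
Definition E_notfalse p (B : {set lit p}) : 'rV[R]_(p + p) :=
  \row_j ((negl (litidx j) \notin B) : nat)%:R.
Definition E_assigned p (B : {set lit p}) : 'rV[R]_(p + p) :=
  \row_j (((litidx j \in B) || (negl (litidx j) \in B)) : nat)%:R.

Definition dot n (u w : 'rV[R]_n) : R := \sum_(j < n) u 0 j * w 0 j.
End Enc.

Definition is3SAT p c (C : 'I_c -> {set lit p}) : Prop :=
  forall i, inB (C i) /\ #|C i| <= 3.

Definition sat p c (C : 'I_c -> {set lit p}) (A : {set lit p}) : Prop :=
  forall i, exists l, l \in C i /\ l \in A.

Definition forced_false p (A : {set lit p}) (l : lit p) : bool := negl l \in A.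

Definition entails_notA p c (C : 'I_c -> {set lit p}) (A : {set lit p}) : Prop :=
  exists i, forall l, l \in C i -> forced_false A l.

Definition unit_prop p c (C : 'I_c -> {set lit p}) (A : {set lit p}) (l : lit p) : bool :=
  [exists i, [forall l', (l' \in C i) ==> (l' \notin A)] &&
             ([set l' in C i | ~~ forced_false A l'] == [set l])].

Definition deduced p c (C : 'I_c -> {set lit p}) (A : {set lit p}) : {set lit p} :=
  [set l | unit_prop C A l].

From HB Require Import structures.
From mathcomp Require Import all_boot all_order all_algebra.
From mathcomp Require Import constructive_ereal.
Import Order.TTheory GRing.Theory Num.Theory.
Set Implicit Arguments.
Unset Strict Implicit.
Unset Printing Implicit Defensive.
Local Open Scope ring_scope.

(* Each encoding turns a condition on a clause into a count of literals: the
   dot product E(C).E(A) is |C n A|, and E(C).E_not-false(A) is the number of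
   literals of C not falsified by A.  Hence A satisfies F iff every count of
   the first kind is at least 1, F refutes A iff some count of the second kind
   is 0, and C is a unit clause iff its second count is 1.  A literal is
   deduced iff it lies in some unit clause and is unassigned (A being
   consistent), and min(., 1) - assigned, clipped at 0, computes exactly this
   indicator. *)

Definition idx_of_lit p (l : lit p) : 'I_(p + p) :=
  unsplit (if l.2 then inl l.1 else inr l.1).

Lemma litidx_bij p : bijective (@litidx p).
Proof.
exists (@idx_of_lit p).
- by move=> j; rewrite -[j in RHS]splitK /idx_of_lit /litidx; case: (split j).
- by case=> v [] /=; rewrite /idx_of_lit /litidx unsplitK.
Qed.

Lemma sum_litidx (V : nmodType) p (g : lit p -> V) :
  \sum_(j < p + p) g (litidx j) = \sum_l g l.
Proof. by rewrite (reindex _ (onW_bij _ (litidx_bij p))). Qed.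

Lemma sumr_nat_bool (R : pzSemiRingType) (T : finType) (b : pred T) :
  \sum_x (b x : nat)%:R = #|b|%:R :> R.
Proof.
rewrite -natr_sum -sum1_card; congr _%:R.
by rewrite [RHS]big_mkcond; apply: eq_bigr => x _; rewrite unfold_in; case: (b x).
Qed.

Definition unfalsified p (A X : {set lit p}) := [set l in X | ~~ forced_false A l].

Lemma inB_negl p (A : {set lit p}) l : inB A -> l \in A -> negl l \notin A.
Proof.
case: l => v b /forallP /(_ v) hv lA; apply/negP => nlA.
by case: b lA nlA hv => /= -> ->.
Qed.

Lemma setI_subset_unfalsified p (A X : {set lit p}) :
  inB A -> X :&: A \subset unfalsified A X.
Proof.
move=> hA; apply/subsetP => l; rewrite !inE => /andP[lX lA].
by rewrite lX /forced_false (inB_negl hA lA).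
Qed.

Section Dot.
Variable R : numDomainType.

Lemma dot_indicator p (a b : pred (lit p)) :
  dot (\row_j (a (litidx j) : nat)%:R) (\row_j (b (litidx j) : nat)%:R)
  = #|[pred l | a l && b l]|%:R :> R.
Proof.
rewrite /dot -sumr_nat_bool -sum_litidx; apply: eq_bigr => j _.
by rewrite !mxE -natrM mulnb.
Qed.

Lemma dot_E_E p (X Y : {set lit p}) : dot (E R X) (E R Y) = #|X :&: Y|%:R.
Proof.
rewrite (dot_indicator (mem X) (mem Y)); congr _%:R.
by apply: eq_card => l; rewrite !inE.
Qed.

Lemma dot_E_notfalse p (X A : {set lit p}) :
  dot (E R X) (E_notfalse R A) = #|unfalsified A X|%:R.
Proof.
rewrite (dot_indicator (mem X) (fun l => negl l \notin A)); congr _%:R.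
by apply: eq_card => l; rewrite !inE.
Qed.

Lemma clause_sat_dot p (X A : {set lit p}) :
  (exists l, l \in X /\ l \in A) <-> 1 <= dot (E R X) (E R A).
Proof.
rewrite dot_E_E ler1n card_gt0; split.
  by case=> l [lX lA]; apply/set0Pn; exists l; rewrite inE lX.
by case/set0Pn => l; rewrite inE => /andP[]; exists l.
Qed.

Lemma clause_falsified_dot p (X A : {set lit p}) :
  (forall l, l \in X -> forced_false A l) <-> dot (E R X) (E_notfalse R A) = 0.
Proof.
rewrite dot_E_notfalse; split => [hX | /eqP].
  apply/eqP; rewrite pnatr_eq0 cards_eq0; apply/eqP/setP => l.
  by rewrite !inE; case: (boolP (l \in X)) => // /hX ->.
rewrite pnatr_eq0 cards_eq0 => /eqP h0 l lX; apply/negPn/negP => nfl.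
by have := in_set0 l; rewrite -h0 inE lX nfl.
Qed.

End Dot.

Lemma bigmin_eq_lbP d (T : orderType d) (I : finType) (x m : T) (F : I -> T) :
  (m < x)%O -> (forall i, m <= F i <= x)%O ->
  \big[Order.min/x]_i F i = m <-> exists i, F i = m.
Proof.
move=> mx hF; split => [|[i Fi]].
- case: (pickP (@predT I)) => [j _ | I0] hmin.
    have Fx i : predT i -> (F i <= x)%O by case/andP: (hF i).
    have [i _ Fi] := @eq_bigmin _ _ I x j predT F erefl Fx.
    by exists i; rewrite -Fi.
  by move: mx; rewrite -hmin big_pred0 // ltxx.
- apply/eqP; rewrite eq_le -{1}Fi bigmin_le /=; apply/bigmin_geP; split => [|k _].
    exact: ltW.
  by case/andP: (hF k).
Qed.

Lemma sat_iff_bigmin (R : realDomainType) p c (C : 'I_c -> {set lit p}) A :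
  sat C A <->
  (1%:E <= \big[Order.min/+oo%E]_(i < c) (dot (E R (C i)) (E R A))%:E)%E.
Proof.
split => [hs | /bigmin_geP [_ h] i].
  apply/bigmin_geP; split => [|i _]; first exact: leey.
  by rewrite lee_fin; apply/clause_sat_dot/hs.
by apply/(clause_sat_dot R); rewrite -lee_fin; apply: h.
Qed.

Lemma entails_notA_iff_bigmin (R : realDomainType) p c (C : 'I_c -> {set lit p}) A :
  entails_notA C A <->
  \big[Order.min/+oo%E]_(i < c) (dot (E R (C i)) (E_notfalse R A))%:E = 0%:E.
Proof.
have hF i : (0%:E <= (dot (E R (C i)) (E_notfalse R A))%:E <= +oo)%E.
  by rewrite leey andbT lee_fin dot_E_notfalse ler0n.
split => [[i /(clause_falsified_dot R) hi] | /(bigmin_eq_lbP (ltry 0) hF) [i [] hi]].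
  by apply/(bigmin_eq_lbP (ltry 0) hF); exists i; rewrite hi.
by exists i; apply/(clause_falsified_dot R).
Qed.

(* Consistency of [A] is what rules out a unit clause that is already satisfied:
   a satisfying literal would itself be unfalsified, hence equal to [l]. *)
Lemma unit_clauseE p (A X : {set lit p}) l : inB A ->
  [forall l', (l' \in X) ==> (l' \notin A)] && (unfalsified A X == [set l]) =
  [&& l \in X, #|unfalsified A X| == 1%N & ~~ ((l \in A) || (negl l \in A))].
Proof.
move=> hA; apply/idP/idP.
- case/andP => /forall_inP noA /eqP Xl.
  have : l \in unfalsified A X by rewrite Xl set11.
  rewrite inE negb_or /forced_false => /andP[lX ->].
  by rewrite lX Xl cards1 noA.
- case/and3P => lX /cards1P[l1 Xl1]; rewrite negb_or => /andP[lA nlA].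
  have Xl : unfalsified A X = [set l].
    have : l \in unfalsified A X by rewrite inE lX.
    by rewrite Xl1 inE => /eqP <-.
  rewrite Xl eqxx andbT; apply/forall_inP => l' l'X; apply/negP => l'A.
  have : l' \in unfalsified A X.
    by apply: (subsetP (setI_subset_unfalsified X hA)); rewrite inE l'X.
  by rewrite Xl inE => /eqP el'; rewrite -el' l'A in lA.
Qed.

Lemma unit_propE p c (C : 'I_c -> {set lit p}) A l : inB A ->
  unit_prop C A l =
  [exists i, (l \in C i) && (#|unfalsified A (C i)| == 1%N)]
  && ~~ ((l \in A) || (negl l \in A)).
Proof.
move=> hA; rewrite /unit_prop.
under eq_existsb => i do rewrite -/(unfalsified A (C i)) unit_clauseE // andbA.
apply/existsP/andP => [[i /andP[hi ->]] | [/existsP[i hi] ->]].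
  by split=> //; apply/existsP; exists i.
by exists i; rewrite hi.
Qed.

Lemma max_min1_sub_nat (R : realDomainType) n (a : bool) :
  Num.max (Num.min n%:R 1 - (a : nat)%:R) 0 = ((0 < n)%N && ~~ a : nat)%:R :> R.
Proof.
have -> : Num.min (n%:R : R) 1 = ((0 < n)%N : nat)%:R.
  by case: n => [|n]; [apply: min_l | apply: min_r; rewrite ler1n].
case: (0 < n)%N; case: a; rewrite /= ?subrr ?maxxx //.
- by rewrite subr0; apply: max_l.
- by rewrite sub0r; apply: max_r; rewrite lerN10.
Qed.

Lemma E_deduced (R : realDomainType) p c (C : 'I_c -> {set lit p}) A : inB A ->
  E R (deduced C A) =
  \row_j Num.max
    (Num.min (\sum_(i < c) E R (C i) 0 j *
               ((dot (E R (C i)) (E_notfalse R A) == 1 : bool) : nat)%:R) 1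
     - E_assigned R A 0 j) 0.
Proof.
move=> hA; apply/rowP => j; rewrite !mxE.
under eq_bigr => i _ do rewrite mxE dot_E_notfalse pnatr_eq1 -natrM mulnb.
rewrite sumr_nat_bool max_min1_sub_nat inE unit_propE //; congr ((_ && _ : nat)%:R).
by apply/existsP/card_gt0P => -[i hi]; exists i.
Qed.

Theorem mainTheorem2 (R : realDomainType) (p c : nat)
    (C : 'I_c -> {set lit p}) (A : {set lit p}) :
  is3SAT C -> inB A ->
  [/\ (sat C A <->
         (1%:E <= \big[Order.min/+oo%E]_(i < c) (dot (E R (C i)) (E R A))%:E)%E),
      (entails_notA C A <->
         \big[Order.min/+oo%E]_(i < c) (dot (E R (C i)) (E_notfalse R A))%:E = 0%:E)
    & E R (deduced C A) =
      \row_j Num.max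
        (Num.min (\sum_(i < c) E R (C i) 0 j *
                   ((dot (E R (C i)) (E_notfalse R A) == 1 : bool) : nat)%:R) 1
         - E_assigned R A 0 j) 0].
Proof.
move=> _ hA; split.
- exact: sat_iff_bigmin.
- exact: entails_notA_iff_bigmin.
- exact: E_deduced.
Qed.
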